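(* Let $\mathcal{N}=((V,A),\varphi)$ be a rooted $X$-cactus. Then $\mathcal{N}$ is temporal if and only if for every vertex $u\in V$ the following three properties hold: (a) if $u\in\varphi(X)$, then either $u$ is a leaf or $u$ is a parent of a reticulation vertex that is a leaf; (b) if $u$ has outdegree at least $2$, then $u$ is not the parent of a reticulation vertex that is a leaf; (c) if $u$ is the parent of a reticulation vertex $v$ in a reticulation cycle $\{P,P'\}$, then neither of the directed paths $P,P'$ consists of the single arc $(u,v)$.
   Context: Let $X$ be a finite non-empty set. A directed graph $N=(V,A)$ has a finite non-empty vertex set $V$ and arc set $A\subseteq V\times V$. It is a rooted DAG if it has no directed cycle and has a vertex $\rho$ of indegree $0$ (the root) such that every vertex is reachable from $\rho$ by a directed path. A leaf is a vertex of outdegree $0$, an internal vertex has outdegree $\ge 1$, a tree vertex has indegree $\le 1$, and a reticulation vertex has indegree $\ge 2$. If $(u,v)\in A$, then $v$ is a child of $u$ and $u$ is a parent of $v$. A reticulation cycle $\{P,P'\}$ consists of two distinct directed paths $P,P'$ with the same start vertex and the same end vertex but no other vertices in common. A rooted $X$-cactus $\mathcal{N}=(N,\varphi)$ is a rooted DAG $N=(V,A)$ together with a map $\varphi:X\to V$ such that (RC1) every vertex has indegree at most $2$; (RC2) no two distinct reticulation cycles have an arc in common; (RC3) $\varphi(X)$ contains all leaves and all tree vertices of outdegree $1$. A time-stamp function on $\mathcal{N}$ is a map $t:V\to\mathbb{R}_{\ge 0}$ with (TS1) $t(v)=0$ for all $v\in\varphi(X)$; (TS2) $t(u)>t(v)$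 for every arc $(u,v)$ such that $v$ is not a reticulation vertex; (TS3) $t(v)=t(p_1)=t(p_2)$ for every reticulation vertex $v$ with parents $p_1,p_2$. $\mathcal{N}$ is called temporal if a time-stamp function on its vertices exists. *)

From mathcomp Require Import all_boot.
From Stdlib Require Import Reals.
Set Implicit Arguments. Unset Strict Implicit. Unset Printing Implicit Defensive.

Section Cactus.
Variables (V : finType) (A : rel V).

Definition indeg (v : V) : nat := #|[set u | A u v]|.
Definition outdeg (u : V) : nat := #|[set w | A u w]|.
Definition is_leaf (v : V) : Prop := outdeg v = 0.
Definition is_tree_vertex (v : V) : Prop := indeg v <= 1.
Definition is_reticulation (v : V) : Prop := 2 <= indeg v.

Definition is_dpath (s : seq V) : bool :=
  if s is x :: p then (p != [::]) && path A x p && uniq s else false.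

Definition path_arcs (s : seq V) : seq (V * V) := zip s (behead s).

Definition acyclic : Prop :=
  forall (x : V) (p : seq V), p != [::] -> path A x p -> last x p <> x.

Definition rooted_DAG : Prop :=
  acyclic /\ exists rho : V, indeg rho = 0 /\ forall v : V, connect A rho v.

Definition ret_cycle (P Q : seq V) : Prop :=
  [/\ is_dpath P, is_dpath Q, P <> Q &
   exists s t : V,
     [/\ head t P = s, head t Q = s, last s P = t, last s Q = t &
      forall w, w \in P -> w \in Q -> w = s \/ w = t]].

Definition rooted_cactus (X : finType) (phi : X -> V) : Prop :=
  [/\ 0 < #|X|,
      rooted_DAG,
      forall v, indeg v <= 2,
      (forall P P' Q Q', ret_cycle P P' -> ret_cycle Q Q' ->
                  (exists e, e \in path_arcs P ++ path_arcs P' /\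
                             e \in path_arcs Q ++ path_arcs Q') ->
                  (P = Q /\ P' = Q') \/ (P = Q' /\ P' = Q)) &
      forall v, (is_leaf v \/ (is_tree_vertex v /\ outdeg v = 1)) ->
                  exists x, phi x = v].

Definition time_stamp (X : finType) (phi : X -> V) (t : V -> R) : Prop :=
  (forall v, (0 <= t v)%R) /\
  (forall x, t (phi x) = 0%R) /\
  (forall u v, A u v -> ~ is_reticulation v -> (t u > t v)%R) /\
  (forall u v, A u v -> is_reticulation v -> t u = t v).

Definition temporal (X : finType) (phi : X -> V) : Prop :=
  exists t : V -> R, time_stamp phi t.

Definition parent_of_leaf_reticulation (u : V) : Prop :=
  exists v, A u v /\ is_reticulation v /\ is_leaf v.

Definition cond_a (X : finType) (phi : X -> V) (u : V) : Prop :=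
  (exists x, phi x = u) -> is_leaf u \/ parent_of_leaf_reticulation u.

Definition cond_b (u : V) : Prop :=
  2 <= outdeg u -> ~ parent_of_leaf_reticulation u.

Definition cond_c (u : V) : Prop :=
  forall v P P', A u v -> is_reticulation v -> ret_cycle P P' ->
    (v \in P \/ v \in P') -> P <> [:: u; v] /\ P' <> [:: u; v].

End Cactus.

From mathcomp Require Import all_boot.
From Stdlib Require Import Reals Lra.
Set Implicit Arguments. Unset Strict Implicit. Unset Printing Implicit Defensive.

(* A time stamp is constant on every cluster (a reticulation together with its parents)
   and strictly decreases along every arc into a tree vertex.

   A labelled vertex has time 0, hence all its children are reticulations of
   time 0, whose children would again be reticulations; this gives (a) and (b). If a
   reticulation cycle had the single arc (u, v) as one side, its other side would lead
   from u to v through tree vertices only, so that t u > t v = t u.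

   Under (c) a reticulation has no reticulation child and a tree vertex has
   at most one, so the clusters are disjoint. Contract them and keep only the arcs into
   tree vertices; by (a) and (b) no arc of this cluster graph leaves a labelled vertex, so
   the number of vertices reachable in it is a time stamp once it is acyclic. A walk that
   has left the cluster of v stays reachable from the source of the cycle with sink v
   through that cycle and the cluster; as distinct reticulation cycles share no arc, such a
   walk can enter a cycle only at its sink, and so never returns to the cluster of v. *)

Section Arcs.
Variable T : eqType.
Implicit Types (x y a b c : T) (p s : seq T).

Lemma mem_arcs x p a b : (a, b) \in zip (x :: p) p -> a \in x :: p /\ b \in p.
Proof.
elim: p x => [//|y p IH] x /=; rewrite in_cons => /orP [/eqP [-> ->]|/IH [H1 H2]].
  by rewrite !in_cons !eqxx.
by split; rewrite in_cons; apply/orP; right.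
Qed.

Lemma arcs_cat x p s :
  zip (x :: (p ++ s)) (p ++ s) = zip (x :: p) p ++ zip (last x p :: s) s.
Proof. by elim: p x => [//|y p IH] x /=; rewrite IH. Qed.

Lemma arcs_rcons x p y :
  zip (x :: rcons p y) (rcons p y) = rcons (zip (x :: p) p) (last x p, y).
Proof. by rewrite -cats1 arcs_cat cats1. Qed.

Lemma arcs_into x p b : b \in p -> exists a, (a, b) \in zip (x :: p) p.
Proof.
elim: p x => [//|y p IH] x; rewrite in_cons => /orP [/eqP ->|/(IH y) [a Ha]].
  by exists x; rewrite /= in_cons eqxx.
by exists a; rewrite /= in_cons Ha orbT.
Qed.

Lemma arcs_functional x p a b c : uniq (x :: p) ->
  (a, b) \in zip (x :: p) p -> (a, c) \in zip (x :: p) p -> b = c.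
Proof.
elim: p x => [//|y p IH] x /= /andP [Hx Hu].
rewrite !in_cons => /orP [/eqP [E1 E2]|H1] /orP [/eqP [E3 E4]|H2].
- by rewrite E2 E4.
- by subst; have [H _] := mem_arcs H2; rewrite H in Hx.
- by subst; have [H _] := mem_arcs H1; rewrite H in Hx.
- exact: IH Hu H1 H2.
Qed.

Lemma arcs_suffix s y p e :
  e \in zip (y :: p) p -> e \in zip (s ++ y :: p) (behead (s ++ y :: p)).
Proof.
elim: s => [//|z s IH] /= H.
by case: s IH => [|z' s] /= IH; rewrite in_cons IH ?orbT.
Qed.

Lemma split_last_occurrence x s :
  x \in s -> exists s1 s2, s = s1 ++ x :: s2 /\ x \notin s2.
Proof.
elim: s => [//|y s IH]; rewrite in_cons.
case Hs: (x \in s) => H; first by have [s1 [s2 [-> N]]] := IH Hs; exists (y :: s1), s2.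
by move: H; rewrite orbF => /eqP <-; exists [::], s; rewrite Hs.
Qed.

Lemma split_after_last x y p : p != [::] -> x != last y p -> exists p1 z p2,
  [/\ y :: p = p1 ++ z :: p2, p2 != [::] & x \notin p2].
Proof.
move=> Hp Hx; case Hin: (x \in y :: p).
  have [p1 [p2 [E N]]] := split_last_occurrence Hin; exists p1, x, p2; split => //.
  by apply: contraNneq Hx => E2; rewrite -(last_cons y y) E E2 last_cat.
by exists [::], y, p; split => //; apply/negP => Hxp; rewrite in_cons Hxp orbT in Hin.
Qed.

Lemma last_suffix x p p1 y p2 : x :: p = p1 ++ y :: p2 -> last y p2 = last x p.
Proof. by move=> E; rewrite -(last_cons x x p) E last_cat. Qed.

End Arcs.

Section Digraph.
Variables (V : finType) (A : rel V).
Implicit Types (u v w x y z : V) (p : seq V).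

Lemma path_arcs_rel x p a b : path A x p -> (a, b) \in zip (x :: p) p -> A a b.
Proof.
elim: p x => [//|y p IH] x /= /andP [Hxy Hp]; rewrite in_cons.
by case/orP => [/eqP [-> ->]//|]; apply: IH.
Qed.

Lemma connect_to_last x p w : path A x p -> w \in x :: p -> connect A w (last x p).
Proof.
elim: p x w => [|y p IH] x w /=; first by rewrite inE => _ /eqP ->.
case/andP=> Hxy Hp; rewrite in_cons => /orP [/eqP ->|]; last exact: IH.
exact: connect_trans (connect1 Hxy) (IH y y Hp (mem_head y p)).
Qed.

Lemma reticulation_of_parents a b v : a != b -> A a v -> A b v -> is_reticulation A v.
Proof.
move=> Hab Ha Hb; rewrite /is_reticulation /indeg.
have <- : #|[set a; b]| = 2 by rewrite cards2 Hab.
by apply: subset_leq_card; apply/subsetP => w; rewrite !inE => /orP [] /eqP ->.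
Qed.

Lemma other_parent a v : is_reticulation A v -> A a v -> exists b, b != a /\ A b v.
Proof.
rewrite /is_reticulation /indeg (cardsD1 a) inE => + Ha; rewrite Ha.
by case/card_gt0P => b; rewrite !inE => /andP [H1 H2]; exists b.
Qed.

Lemma parents_indeg2 v a b x : indeg A v <= 2 -> a != b -> A a v -> A b v -> A x v ->
  x = a \/ x = b.
Proof.
move=> Hd Hab Ha Hb Hx.
case: (eqVneq x a) => [->|Hxa]; first by left.
case: (eqVneq x b) => [->|Hxb]; first by right.
suff : #|[set x; a; b]| <= indeg A v.
  by rewrite -setUA cardsU1 cards2 Hab !inE negb_or Hxa Hxb => /leq_trans/(_ Hd).
by apply: subset_leq_card; apply/subsetP => w; rewrite !inE => /orP [/orP []|] /eqP ->.
Qed.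

Lemma outdeg_children u a b : a != b -> A u a -> A u b -> 2 <= outdeg A u.
Proof.
move=> Hab Ha Hb; rewrite /outdeg.
have <- : #|[set a; b]| = 2 by rewrite cards2 Hab.
by apply: subset_leq_card; apply/subsetP => w; rewrite !inE => /orP [] /eqP ->.
Qed.

Lemma other_child u v : 2 <= outdeg A u -> A u v -> exists w, w != v /\ A u w.
Proof.
rewrite /outdeg (cardsD1 v) inE => + Hv; rewrite Hv.
by case/card_gt0P => w; rewrite !inE => /andP [H1 H2]; exists w.
Qed.

Lemma outdegP u : reflect (exists v, A u v) (outdeg A u != 0).
Proof.
rewrite /outdeg -lt0n; apply: (iffP card_gt0P) => [] [v Hv]; exists v;
  by move: Hv; rewrite inE.
Qed.

Lemma leaf_arc u w : is_leaf A u -> ~ A u w.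
Proof. by rewrite /is_leaf => /eqP Hu Hw; case/outdegP: Hu; exists w. Qed.

Lemma connect_invariant (e : rel V) (P : V -> Prop) x y :
  (forall a b, P a -> e a b -> P b) -> connect e x y -> P x -> P y.
Proof.
move=> He /connectP [p Hp ->]; elim: p x Hp => [//|z p IH] x /= /andP [Hxz Hp] Hx.
exact: IH Hp (He _ _ Hx Hxz).
Qed.

Lemma path_suffix x p p1 y p2 : path A x p -> x :: p = p1 ++ y :: p2 -> path A y p2.
Proof.
case: p1 => [|z p1] /= Hp [E1 E2]; subst; first done.
by move: Hp; rewrite cat_path => /andP [_ /= /andP [_ ->]].
Qed.

Hypothesis acyc : acyclic A.

Lemma acyclic_back_arc x y : connect A x y -> ~ A y x.
Proof.
move=> /connectP [p Hp ->] H.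
apply: (acyc (x := x) (p := rcons p x)); first by case: p {Hp H}.
  by rewrite rcons_path Hp H.
by rewrite last_rcons.
Qed.

Lemma acyclic_irreflexive x : ~ A x x.
Proof. exact: acyclic_back_arc (connect0 _ x). Qed.

Lemma path_head_notin x p : path A x p -> x \notin p.
Proof.
move=> Hp; apply/negP => Hx; have [p1 [p2 [E _]]] := split_last_occurrence Hx; subst p.
move: Hp; rewrite cat_path => /andP [H1 /= /andP [H2 _]].
by apply: (acyclic_back_arc _ H2); apply/connectP; exists p1.
Qed.

Definition desc c := [set w | connect A c w].

Lemma desc_card_lt x z y : A x z -> connect A z y -> #|desc y| < #|desc x|.
Proof.
move=> Hxz Hzy; apply: proper_card; apply/properP; split.
  apply/subsetP => w; rewrite !inE => Hyw.
  exact: connect_trans (connect_trans (connect1 Hxz) Hzy) Hyw.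
exists x; rewrite !inE ?connect0 //; apply/negP => Hyx.
exact: acyclic_back_arc (connect_trans Hzy Hyx) Hxz.
Qed.

End Digraph.

Notation cycle_arcs P Q := (path_arcs P ++ path_arcs Q).

Section Cycles.
Variables (V : finType) (A : rel V).
Implicit Types (u v w x y z a b s : V) (p q : seq V).

Definition arc_disjoint_cycles : Prop :=
  forall P P' Q Q', ret_cycle A P P' -> ret_cycle A Q Q' ->
  (exists e, e \in cycle_arcs P P' /\ e \in cycle_arcs Q Q') ->
  (P = Q /\ P' = Q') \/ (P = Q' /\ P' = Q).

Definition short_cycle_free : Prop :=
  forall P Q u w, ret_cycle A P Q -> P <> [:: u; w].

Definition in_cluster v x := (x == v) || A x v.

Lemma ret_cycle_sym P Q : ret_cycle A P Q -> ret_cycle A Q P.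
Proof.
case=> H1 H2 H3 [s [t [E1 E2 E3 E4 H]]]; split => //; first by move/esym.
by exists s, t; split => // w Hw1 Hw2; apply: H.
Qed.

Lemma ret_cycleE P Q : ret_cycle A P Q -> exists s p q,
  [/\ P = s :: p, Q = s :: q, p != [::], q != [::] &
  [/\ path A s p, path A s q, uniq P, uniq Q &
  [/\ last s p = last s q, P <> Q &
     forall w, w \in P -> w \in Q -> w = s \/ w = last s p]]].
Proof.
case=> HP HQ HPQ [s [t [E1 E2 E3 E4 Hw]]].
case: P HP HPQ E1 E3 Hw => [//|s1 p] /= /andP [/andP [Hp Hpp] Hu] HPQ E1 E3 Hw.
case: Q HQ HPQ E2 E4 Hw => [//|s2 q] /= /andP [/andP [Hq Hqp] Hu'] HPQ E2 E4 Hw.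
subst s1 s2; exists s, p, q; do 3 split => //; first by rewrite E3 E4.
by rewrite E3; apply: Hw.
Qed.

Lemma dpath_rcons s p v : path A s p -> uniq (s :: p) -> A (last s p) v ->
  v \notin s :: p -> is_dpath A (s :: rcons p v).
Proof.
move=> Hp Hu Hl Hv; rewrite /is_dpath rcons_path Hp Hl -rcons_cons rcons_uniq Hv Hu.
by case: p {Hp Hu Hl Hv}.
Qed.

Hypothesis acyc : acyclic A.
Hypothesis root : exists rho, forall v, connect A rho v.

(* A common ancestor of [a] and [b] with the fewest descendants has vertex-disjoint
   shortest paths to them. *)
Lemma disjoint_paths_from_ancestor a b : exists s p q,
  [/\ path A s p, path A s q, uniq (s :: p), uniq (s :: q) &
  [/\ last s p = a, last s q = b & forall w, w \in p -> w \in q -> False]].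
Proof.
have [rho Hrho] := root.
pose common c := connect A c a && connect A c b.
have Hc : common rho by rewrite /common !Hrho.
have [s /andP [Hsa Hsb] Hmin] := arg_minnP (fun c => #|desc A c|) Hc.
case/connectP: Hsa => p0 Hp0 Ea; case: (shortenP Hp0) Ea => p Hp Hup _ Ea.
case/connectP: Hsb => q0 Hq0 Eb; case: (shortenP Hq0) Eb => q Hq Huq _ Eb.
exists s, p, q; split => //; split => // w Hwp Hwq.
have Hwa : connect A w a by rewrite Ea; apply: connect_to_last; rewrite // in_cons Hwp orbT.
have Hwb : connect A w b by rewrite Eb; apply: connect_to_last; rewrite // in_cons Hwq orbT.
have := Hmin w; rewrite /common Hwa Hwb => /(_ isT).
case: p Hp {Hup Ea Hwa} Hwp => [//|z p] /= /andP [Hsz Hp] Hwp.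
by rewrite leqNgt (desc_card_lt acyc Hsz (path_connect Hp Hwp)).
Qed.

Lemma ret_cycle_through_parent a v : is_reticulation A v -> A a v -> exists b s p q,
  [/\ a != b, A b v, last s p = a, last s q = b &
      ret_cycle A (s :: rcons p v) (s :: rcons q v)].
Proof.
move=> Hr Ha; have [b [Hba Hb]] := other_parent Hr Ha.
have [s [p [q [Hp Hq Hup Huq [Ea Eb Hdis]]]]] := disjoint_paths_from_ancestor a b.
have Hvp : v \notin s :: p.
  by apply/negP => /(connect_to_last Hp); rewrite Ea => /(acyclic_back_arc acyc); apply.
have Hvq : v \notin s :: q.
  by apply/negP => /(connect_to_last Hq); rewrite Eb => /(acyclic_back_arc acyc); apply.
exists b, s, p, q; split => //; first by rewrite eq_sym.
split; [by apply: dpath_rcons; rewrite ?Ea | by apply: dpath_rcons; rewrite ?Eb | |].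
  by case=> /(rcons_injl v) Epq; move: Hba; rewrite -Ea -Eb Epq eqxx.
exists s, v; split; rewrite /= ?last_rcons // => w.
rewrite !in_cons !mem_rcons !in_cons.
case/orP => [/eqP ->|/orP [/eqP ->|Hwp]]; [by left | by right |].
case/orP => [/eqP ->|/orP [/eqP ->|Hwq]]; [by left | by right |].
by case: (Hdis w Hwp Hwq).
Qed.

Lemma short_cycle_shape P Q u w : ret_cycle A P Q -> P = [:: u; w] -> exists q,
  [/\ Q = u :: rcons q w, q != [::], path A u q, A (last u q) w & A u w].
Proof.
move=> H EP; have [s [p [q [EP' EQ _ Hq [Hp' Hq' _ _ [El HPQ _]]]]]] := ret_cycleE H.
move: EP'; rewrite EP => -[Es Ep]; subst s p; move: Hp' => /= /andP [Huw _].
case/lastP: q Hq EQ Hq' El HPQ => [//|q w'] _ EQ Hq'; rewrite /= last_rcons => Ew HPQ.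
subst w'; move: Hq'; rewrite rcons_path => /andP [Hq Hqw]; exists q; split => //.
by apply/eqP => Eq; apply: HPQ; rewrite EP EQ Eq.
Qed.

Lemma short_cycle_sink P Q u w : ret_cycle A P Q -> P = [:: u; w] -> is_reticulation A w.
Proof.
move=> H /(short_cycle_shape H) [q [_ Hq Hp Hqw Huw]].
by apply: reticulation_of_parents Hqw Huw; apply/eqP; apply: acyc.
Qed.

Hypothesis RC2 : arc_disjoint_cycles.

Lemma same_sink P P' Q Q' e : ret_cycle A P P' -> ret_cycle A Q Q' ->
  e \in cycle_arcs P P' -> e \in cycle_arcs Q Q' ->
  forall s p s' q, P = s :: p -> Q = s' :: q -> last s p = last s' q.
Proof.
move=> H1 H2 He1 He2 s p s' q EP EQ.
case: (RC2 H1 H2 (ex_intro _ e (conj He1 He2))) => [[E1 E2]|[E1 E2]].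
  by move: EQ; rewrite -E1 EP => [[-> ->]].
have [s2 [q2 [q2' [EQ2 EQ2' _ _ [_ _ _ _ [El _ _]]]]]] := ret_cycleE H2.
by move: EQ EP; rewrite EQ2 E1 EQ2' => [[<- <-]] [<- <-]; rewrite El.
Qed.

Lemma cycle_arc_rel P Q x y : ret_cycle A P Q -> (x, y) \in cycle_arcs P Q -> A x y.
Proof.
move=> /ret_cycleE [s [p [q [-> -> _ _ [Hp Hq _ _ _]]]]].
by rewrite mem_cat => /orP []; [apply: path_arcs_rel Hp | apply: path_arcs_rel Hq].
Qed.

Lemma cycle_arc_reticulation P Q s p x y : ret_cycle A P Q -> P = s :: p ->
  (x, y) \in cycle_arcs P Q -> is_reticulation A y -> y = last s p.
Proof.
move=> H EP He Hr; have Axy := cycle_arc_rel H He.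
have [b [s' [p' [q' [_ _ Ex _ HD]]]]] := ret_cycle_through_parent Hr Axy.
have He' : (x, y) \in cycle_arcs (s' :: rcons p' y) (s' :: rcons q' y).
  by rewrite mem_cat /path_arcs /= arcs_rcons mem_rcons in_cons Ex eqxx.
by rewrite (same_sink H HD He He' EP (erefl _)) last_rcons.
Qed.

Lemma cycle_entry P Q s p q z w : ret_cycle A P Q -> P = s :: p -> Q = s :: q ->
  (z \in P) || (z \in Q) -> z != s -> A w z ->
  (w, z) \notin cycle_arcs P Q -> z = last s p.
Proof.
move=> H EP EQ Hz Hzs Hwz Hn.
have Hz' : (z \in p) || (z \in q) by move: Hz; rewrite EP EQ !in_cons (negbTE Hzs).
have [y [Hy Nyw]] : exists y, (y, z) \in cycle_arcs P Q /\ y != w.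
  have [y Hy] : exists y, (y, z) \in cycle_arcs P Q.
    by case/orP: Hz' => /(arcs_into s) [y Hy]; exists y;
      rewrite mem_cat EP EQ /path_arcs /= Hy ?orbT.
  by exists y; split => //; apply: contraNneq Hn => <-.
apply: (cycle_arc_reticulation H EP Hy).
exact: reticulation_of_parents Nyw (cycle_arc_rel H Hy) Hwz.
Qed.

Lemma walk_on_cycle P Q s p q : ret_cycle A P Q -> P = s :: p -> Q = s :: q ->
  forall x xs, path A x xs -> (last x xs \in P) || (last x xs \in Q) ->
  last s p \notin x :: xs -> s \notin xs ->
  ((x \in P) || (x \in Q)) /\ (forall e, e \in zip (x :: xs) xs -> e \in cycle_arcs P Q).
Proof.
move=> H EP EQ x xs; elim: xs x => [|y xs IH] x /=; first by [].
move=> /andP [Hxy Hp] Hl; rewrite in_cons negb_or => /andP [_ Ht].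
rewrite in_cons negb_or => /andP [Hys Hs].
have [Hy Harcs] := IH y Hp Hl Ht Hs.
have Hin : (x, y) \in cycle_arcs P Q.
  apply/negPn/negP => /(cycle_entry H EP EQ Hy).
  by rewrite eq_sym Hys => /(_ isT Hxy) E; move: Ht; rewrite E in_cons eqxx.
split; last by move=> e; rewrite in_cons => /orP [/eqP ->//|]; apply: Harcs.
by move: Hin; rewrite mem_cat EP EQ /path_arcs /= => /orP [] /mem_arcs [-> _]; rewrite ?orbT.
Qed.

Lemma sink_cycle_arc P Q s p c : ret_cycle A P Q -> P = s :: p ->
  (last s p, c) \notin cycle_arcs P Q.
Proof.
move=> H EP; have [s' [p' [q' [EP' EQ _ _ [Hp Hq _ _ [El _ _]]]]]] := ret_cycleE H.
move: EP'; rewrite EP => -[Es Ep]; subst s' p'; apply/negP => He.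
move: He; rewrite mem_cat EQ /path_arcs /= => /orP [] He.
  apply: (acyclic_back_arc acyc _ (path_arcs_rel Hp He)).
  by apply: connect_to_last; rewrite // in_cons (mem_arcs He).2 orbT.
apply: (acyclic_back_arc acyc _ (path_arcs_rel Hq He)); rewrite El.
by apply: connect_to_last; rewrite // in_cons (mem_arcs He).2 orbT.
Qed.

Lemma parent_cycle_arc s p q v c : ret_cycle A (s :: rcons p v) (s :: rcons q v) ->
  p != [::] -> (last s p, c) \in cycle_arcs (s :: rcons p v) (s :: rcons q v) -> c = v.
Proof.
move=> H Hp; have [s' [p' [q' [[Es Ep] [_ Eq] _ _ [Hpp _ Hup _ [_ _ Hw]]]]]] := ret_cycleE H.
subst s' p' q'.
have Hpv : (last s p, v) \in path_arcs (s :: rcons p v).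
  by rewrite /path_arcs /= arcs_rcons mem_rcons in_cons eqxx.
rewrite mem_cat => /orP [He|He]; first by apply/esym; apply: arcs_functional Hup Hpv He.
have Hin : last s p \in s :: rcons p v by rewrite -rcons_cons mem_rcons in_cons mem_last orbT.
move: Hpp; rewrite rcons_path => /andP [Hp' Hv].
case: (Hw _ Hin (mem_arcs He).1); last first.
  by rewrite last_rcons => Ev; move: Hv; rewrite Ev => /(acyclic_irreflexive acyc).
by move/(acyc Hp Hp').
Qed.

Hypothesis NS : short_cycle_free.

Lemma parent_on_cycle_arc a v : is_reticulation A v -> A a v -> exists y s p Q,
  [/\ ret_cycle A (s :: p) Q, last s p = v, A y a & (y, a) \in cycle_arcs (s :: p) Q].
Proof.
move=> Hr Ha; have [b [s [p [q [_ _ Ea _ H]]]]] := ret_cycle_through_parent Hr Ha.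
case/lastP: p Ea H => [|p a'] Ea H; first by move: Ea H => /= <- H; case: (NS H (erefl _)).
rewrite last_rcons in Ea; subst a'.
have He : (last s p, a) \in cycle_arcs (s :: rcons (rcons p a) v) (s :: rcons q v).
  by rewrite mem_cat /path_arcs /= !arcs_rcons mem_rcons in_cons mem_rcons in_cons eqxx !orbT.
exists (last s p), s, (rcons (rcons p a) v), (s :: rcons q v).
by split; rewrite ?last_rcons //; apply: cycle_arc_rel H He.
Qed.

Lemma reticulation_arc a b : A a b -> is_reticulation A b -> ~ is_reticulation A a.
Proof.
move=> Hab Hb Ha; have [y [s [p [Q [H Ep _ He]]]]] := parent_on_cycle_arc Hb Hab.
have := cycle_arc_reticulation H (erefl _) He Ha; rewrite Ep => Eab.
by move: Hab; rewrite Eab => /(acyclic_irreflexive acyc).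
Qed.

Lemma unique_reticulation_child u v w : ~ is_reticulation A u -> A u v -> A u w ->
  is_reticulation A v -> is_reticulation A w -> v = w.
Proof.
move=> Hu Hv Hw Rv Rw.
have [y1 [s1 [p1 [Q1 [H1 E1 Hy1 He1]]]]] := parent_on_cycle_arc Rv Hv.
have [y2 [s2 [p2 [Q2 [H2 E2 Hy2 He2]]]]] := parent_on_cycle_arc Rw Hw.
case: (eqVneq y1 y2) => [Ey|N]; last by case: Hu; exact: reticulation_of_parents N Hy1 Hy2.
by subst y2; rewrite -E1 -E2; apply: same_sink H1 H2 He1 He2 _ _ _ _ (erefl _) (erefl _).
Qed.

Definition canonical_cycle v s p q : Prop :=
  let C := cycle_arcs (s :: p) (s :: q) in
  [/\ ret_cycle A (s :: p) (s :: q), last s p = v,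
   (forall x, in_cluster v x -> exists r, [/\ r != [::], path A s r, last s r = x &
       forall e, e \in zip (s :: r) r -> e \in C]),
   (forall x, A x v -> (x \in s :: p) || (x \in s :: q)) &
   forall x c, A x v -> (x, c) \in C -> c = v].

Hypothesis RC1 : forall v, indeg A v <= 2.

Lemma canonical_cycle_exists v : is_reticulation A v -> exists s p q, canonical_cycle v s p q.
Proof.
move=> Hr; have [a Ha] : exists a, A a v.
  by case/card_gt0P: (leq_trans (isT : 0 < 2) Hr) => a; rewrite inE; exists a.
have [b [s [p [q [Hab Hb Ea Eb H]]]]] := ret_cycle_through_parent Hr Ha.
subst a b; have H' := ret_cycle_sym H.
have Hp : p != [::] by apply: contraPneq (NS H) => ->.
have Hq : q != [::] by apply: contraPneq (NS H') => ->.
have [s' [p' [q' [[Es Ep] [_ Eq] _ _ [Hpp Hqq _ _ _]]]]] := ret_cycleE H.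
subst s' p' q'.
have Hpar x : A x v -> x = last s p \/ x = last s q := parents_indeg2 (RC1 v) Hab Ha Hb.
have last_mem r : last s r \in s :: rcons r v.
  by rewrite -rcons_cons mem_rcons in_cons mem_last orbT.
have prefix_arcs r e : e \in zip (s :: r) r -> e \in path_arcs (s :: rcons r v).
  by rewrite /path_arcs /= arcs_rcons mem_rcons in_cons => ->; rewrite orbT.
exists s, (rcons p v), (rcons q v); split; rewrite ?last_rcons //.
- move=> x /orP [/eqP ->|/Hpar [->|->]]; [exists (rcons p v) | exists p | exists q];
    split; rewrite ?last_rcons //; try by case: (p).
  + by move=> e He; rewrite mem_cat He.
  + by move: Hpp; rewrite rcons_path => /andP [].
  + by move=> e /prefix_arcs He; rewrite mem_cat He.
  + by move: Hqq; rewrite rcons_path => /andP [].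
  + by move=> e /prefix_arcs He; rewrite mem_cat He orbT.
- by move=> x /Hpar [->|->]; rewrite last_mem ?orbT.
move=> x c /Hpar [->|->]; first exact: parent_cycle_arc.
by rewrite mem_cat orbC -mem_cat; apply: parent_cycle_arc.
Qed.

End Cycles.

Section Forward.
Variables (V X : finType) (A : rel V) (phi : X -> V) (t : V -> R).
Hypothesis acyc : acyclic A.
Hypothesis root : exists rho, forall v, connect A rho v.
Hypothesis RC2 : arc_disjoint_cycles A.
Hypothesis RC3 : forall v, (is_leaf A v \/ (is_tree_vertex A v /\ outdeg A v = 1)) ->
  exists x, phi x = v.
Hypothesis TS : time_stamp A phi t.

Lemma time_stamp_path_lt x p : path A x p -> p != [::] ->
  (forall y, y \in p -> ~ is_reticulation A y) -> (t (last x p) < t x)%R.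
Proof.
case: TS => [_ [_ [TS2 _]]].
elim: p x => [//|y p IH] x /= /andP [Hxy Hp] _ Hr.
have Hy : (t y < t x)%R by apply: TS2 => //; apply: Hr; rewrite in_cons eqxx.
case: p IH Hp Hr => [//|z p] IH Hp Hr.
apply: Rlt_trans (IH y Hp isT _) Hy => w Hw; apply: Hr; by rewrite in_cons Hw orbT.
Qed.

(* The source and the sink of a short cycle would get the same time, although
   time strictly decreases along the long side, whose inner vertices are tree vertices. *)
Lemma time_stamp_short_cycle_free : short_cycle_free A.
Proof.
move=> P Q u w H EP; have [q [EQ Hq Hp Hqw Huw]] := short_cycle_shape H EP.
have Rw := short_cycle_sink acyc H EP.
have [_ [_ [_ [_ _ _ _ [_ _ _ HuQ _]]]]] := ret_cycleE H.
have Hlt : (t (last u q) < t u)%R.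
  apply: time_stamp_path_lt => // y Hy Ry; have [x Hx] := arcs_into u Hy.
  have Hx' : (x, y) \in cycle_arcs P Q.
    by rewrite mem_cat EQ /path_arcs /= arcs_rcons mem_rcons in_cons Hx !orbT.
  have /= Ey := cycle_arc_reticulation acyc root RC2 H EP Hx' Ry; subst y.
  by move: HuQ; rewrite EQ /= rcons_uniq Hy /= andbF.
case: TS => [_ [_ [_ TS3]]].
by move: Hlt; rewrite (TS3 _ _ Huw Rw) (TS3 _ _ Hqw Rw); apply: Rlt_irrefl.
Qed.

Lemma time_stamp_cond_c u : cond_c A u.
Proof.
move=> v P P' _ _ H _; split; first exact: time_stamp_short_cycle_free H.
exact: time_stamp_short_cycle_free (ret_cycle_sym H).
Qed.

Lemma time_stamp_zero_child u v : t u = 0%R -> A u v -> is_reticulation A v /\ t v = 0%R.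
Proof.
case: TS => [T0 [_ [TS2 TS3]]] Hu Huv.
case Hr: (2 <= indeg A v); first by split => //; rewrite -(TS3 _ _ Huv Hr).
have NR : ~ is_reticulation A v by rewrite /is_reticulation Hr.
by have := TS2 _ _ Huv NR; have := T0 v; lra.
Qed.

Let NS := time_stamp_short_cycle_free.

Lemma time_stamp_cond_a u : cond_a A phi u.
Proof.
move=> [x Hx]; have Hu : t u = 0%R by case: TS => [_ [T1 _]]; rewrite -Hx T1.
case Hout: (outdeg A u) => [|n]; [by left | right].
have [v Huv] : exists v, A u v by apply/outdegP; rewrite Hout.
have [Rv Tv] := time_stamp_zero_child Hu Huv.
exists v; do 2 split => //; apply/eqP/negPn/negP => /outdegP [w Hvw].
have [Rw _] := time_stamp_zero_child Tv Hvw.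
exact: (reticulation_arc acyc root RC2 NS Hvw Rw Rv).
Qed.

Lemma time_stamp_cond_b u : cond_b A u.
Proof.
move=> Ho [v [Huv [Rv Lv]]].
have Tv : t v = 0%R.
  by have [x <-] := RC3 (or_introl Lv); case: TS => [_ [T1 _]]; apply: T1.
have Tu : t u = 0%R by case: TS => [_ [_ [_ TS3]]]; rewrite (TS3 _ _ Huv Rv).
have [w [Hwv Huw]] := other_child Ho Huv.
have [Rw _] := time_stamp_zero_child Tu Huw.
have Nu := reticulation_arc acyc root RC2 NS Huv Rv.
by move: Hwv; rewrite (unique_reticulation_child acyc root RC2 NS Nu Huv Huw Rv Rw) eqxx.
Qed.

End Forward.

Section Clusters.
Variables (V : finType) (A : rel V).
Hypothesis acyc : acyclic A.
Hypothesis root : exists rho, forall v, connect A rho v.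
Hypothesis RC2 : arc_disjoint_cycles A.
Hypothesis NS : short_cycle_free A.
Implicit Types (u v w x y z : V).

Definition reticulationb v := 2 <= indeg A v.

Definition clustered y := [exists v, reticulationb v && in_cluster A v y].

Definition same_cluster x y :=
  (x == y) || [exists v, [&& reticulationb v, in_cluster A v x & in_cluster A v y]].

(* The arcs of the graph obtained by contracting every reticulation with its parents
   and deleting the arcs into reticulations. *)
Definition cluster_arc x y :=
  [exists x1, exists z1,
     [&& same_cluster x x1, A x1 z1, ~~ reticulationb z1 & same_cluster z1 y]].

Lemma cluster_arcP x y : reflect (exists x1 z1,
    [/\ same_cluster x x1, A x1 z1, ~~ reticulationb z1 & same_cluster z1 y])
  (cluster_arc x y).
Proof.
apply: (iffP existsP) => [[x1 /existsP [z1 /and4P [? ? ? ?]]]|[x1 [z1 [? ? ? ?]]]].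
  by exists x1, z1.
by exists x1; apply/existsP; exists z1; apply/and4P.
Qed.

Lemma same_cluster_refl x : same_cluster x x.
Proof. by rewrite /same_cluster eqxx. Qed.

Lemma same_clusterC x y : same_cluster x y = same_cluster y x.
Proof.
rewrite /same_cluster eq_sym; congr (_ || _).
by apply/existsP/existsP => [] [v /and3P [H1 H2 H3]]; exists v; rewrite H1 H2 H3.
Qed.

Lemma in_cluster_same v x : reticulationb v -> in_cluster A v x -> same_cluster x v.
Proof.
by move=> Rv Hx; apply/orP; right; apply/existsP; exists v; rewrite Rv Hx /in_cluster eqxx.
Qed.

(* A reticulation has no reticulation child and a tree vertex has at most one. *)
Lemma in_cluster_unique v1 v2 y : reticulationb v1 -> reticulationb v2 ->
  in_cluster A v1 y -> in_cluster A v2 y -> v1 = v2.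
Proof.
move=> R1 R2 /orP [/eqP Ey1|Ay1] /orP [/eqP Ey2|Ay2].
- by rewrite -Ey1 -Ey2.
- by subst y; case: (reticulation_arc acyc root RC2 NS Ay2 R2 R1).
- by subst y; case: (reticulation_arc acyc root RC2 NS Ay1 R1 R2).
have Ny := reticulation_arc acyc root RC2 NS Ay1 R1.
exact: (unique_reticulation_child acyc root RC2 NS Ny Ay1 Ay2 R1 R2).
Qed.

Lemma same_cluster_trans y x z : same_cluster x y -> same_cluster y z -> same_cluster x z.
Proof.
rewrite /same_cluster => /orP [/eqP ->//|/existsP [v1 /and3P [R1 Hx1 Hy1]]].
move=> /orP [/eqP <-|/existsP [v2 /and3P [R2 Hy2 Hz2]]].
  by apply/orP; right; apply/existsP; exists v1; rewrite R1 Hx1 Hy1.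
rewrite -(in_cluster_unique R1 R2 Hy1 Hy2) in Hz2.
by apply/orP; right; apply/existsP; exists v1; rewrite R1 Hx1 Hz2.
Qed.

Lemma same_cluster_reticulation x v : same_cluster x v -> reticulationb v -> in_cluster A v x.
Proof.
move=> /orP [/eqP ->|/existsP [v1 /and3P [R1 Hx1 Hv1]]] Rv; first by rewrite /in_cluster eqxx.
have Hvv : in_cluster A v v by rewrite /in_cluster eqxx.
by rewrite -(in_cluster_unique R1 Rv Hv1 Hvv).
Qed.

Lemma unclustered_same_cluster x y : ~~ clustered x -> same_cluster x y -> y = x.
Proof.
move=> Hn /orP [/eqP ->//|/existsP [v /and3P [R Hx _]]].
by case/negP: Hn; apply/existsP; exists v; rewrite R Hx.
Qed.

Definition cluster_reach x y := [exists z, cluster_arc x z && connect cluster_arc z y].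

Lemma cluster_reach_connect x y : cluster_reach x y -> connect cluster_arc x y.
Proof. by case/existsP => z /andP [Hxz Hzy]; apply: connect_trans (connect1 Hxz) Hzy. Qed.

Lemma cluster_reach_rotate x w : cluster_reach x w -> connect cluster_arc w x ->
  cluster_reach w w.
Proof.
move=> Hxw /connectP [[|z p] /= Hp Ex]; subst x => //.
case/andP: Hp => Hwz Hp; apply/existsP; exists z; rewrite Hwz.
by apply: connect_trans (cluster_reach_connect Hxw); apply/connectP; exists p.
Qed.

Lemma unclustered_cluster_arc x y : ~~ clustered x -> ~~ clustered y ->
  cluster_arc x y -> A x y.
Proof.
move=> Nx Ny /cluster_arcP [x1 [z1 [Hx1 Hxz Nz Hzy]]].
rewrite -(unclustered_same_cluster Nx Hx1); suff <- : z1 = y by [].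
by apply: unclustered_same_cluster Ny _; rewrite same_clusterC.
Qed.

End Clusters.

Section BeyondCluster.
Variables (V : finType) (A : rel V).
Hypothesis acyc : acyclic A.
Hypothesis root : exists rho, forall v, connect A rho v.
Hypothesis RC1 : forall v, indeg A v <= 2.
Hypothesis RC2 : arc_disjoint_cycles A.
Hypothesis NS : short_cycle_free A.
Variables (v s : V) (p q : seq V).
Hypothesis Rv : reticulationb A v.
Hypothesis HC : canonical_cycle A v s p q.
Local Notation C := (cycle_arcs (s :: p) (s :: q)).
Implicit Types (u w x y z : V) (a r : seq V).

Definition cluster_route a :=
  [/\ a != [::], path A s a, {subset zip (s :: a) a <= C} & in_cluster A v (last s a)].

Definition beyond_cluster y := exists a r,
  [/\ cluster_route a, r != [::], path A (last s a) r & last (last s a) r = y].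

Lemma beyond_cluster_arc y z : beyond_cluster y -> A y z -> beyond_cluster z.
Proof.
move=> [a [r [Ha Hr Hp <-]]] Hyz; exists a, (rcons r z).
by rewrite rcons_path Hp Hyz last_rcons; split => //; case: (r).
Qed.

Lemma beyond_cluster_child x z : in_cluster A v x -> A x z -> beyond_cluster z.
Proof.
case: HC => [_ _ Hroute _ _] Hx Hxz; have [a [Ha Hpa Ea HaC]] := Hroute x Hx.
by exists a, [:: z]; rewrite Ea /= Hxz; do 2 split => //; rewrite Ea.
Qed.

Lemma beyond_cluster_not_parent z : beyond_cluster z -> ~~ reticulationb A z -> ~~ A z v.
Proof.
move=> [a [r [[Ha Hpa HaC Hm] Hr Hpr Hl]]] Nz; apply/negP => Hzv.
case: HC => [H Ep _ Hon Hexit].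
have Hpath : path A s (a ++ r) by rewrite cat_path Hpa Hpr.
have Hlast : last s (a ++ r) = z by rewrite last_cat.
have Hv : last s p \notin s :: (a ++ r).
  rewrite Ep; apply/negP => /(connect_to_last Hpath); rewrite Hlast.
  by move/(acyclic_back_arc acyc); apply.
have Hz : (last s (a ++ r) \in s :: p) || (last s (a ++ r) \in s :: q).
  by rewrite Hlast; apply: Hon.
have [_ Harcs] := walk_on_cycle acyc root RC2 H (erefl _) (erefl _) Hpath Hz Hv
  (path_head_notin acyc Hpath).
case: r Hr Hpr Hl Harcs Hv {Hpath Hlast Hz} => [//|b r] _ _ Hl Harcs Hv.
have Hb : (last s a, b) \in C by apply: Harcs; rewrite arcs_cat mem_cat /= in_cons eqxx orbT.
case/orP: Hm => [/eqP Elv|Hav].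
  by move: Hb; rewrite Elv -{1}Ep (negbTE (sink_cycle_arc acyc b H (erefl _))).
by move: Hv; rewrite Ep -(Hexit _ _ Hav Hb) !(in_cons, mem_cat) eqxx !orbT.
Qed.

Lemma beyond_cluster_reroute a r s2 r2 : cluster_route a -> path A (last s a) r ->
  s2 \in last s a :: r -> r2 != [::] -> path A s2 r2 -> beyond_cluster (last s2 r2).
Proof.
move=> Ha Hpr; rewrite in_cons => /orP [/eqP ->|Hin] Hr2 Hp2; first by exists a, r2.
move: Hpr; case/splitPr: Hin => r1 r1' Hpr; exists a, (r1 ++ s2 :: r2).
split; rewrite ?last_cat //; first by case: (r1).
by move: Hpr; rewrite !cat_path /= Hp2 => /andP [-> /andP [-> _]].
Qed.

(* Otherwise the walk from the last visit of [s2] on the route (or from [s]) to the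
   parent of [v2] at the end of [r] would start with an arc of the cycle of [v] that also
   lies on the cycle of [v2], and the two cycles would share their sink. *)
Lemma beyond_cluster_source_on_tail a r v2 s2 p2 q2 :
  cluster_route a -> path A (last s a) r ->
  A (last (last s a) r) v2 -> ~~ A (last (last s a) r) v ->
  canonical_cycle A v2 s2 p2 q2 -> s2 \in last s a :: r.
Proof.
move=> [Ha Hpa HaC _] Hpr Hyv2 Nyv [HC2 Ep2 _ Hon2 _]; apply/negPn/negP => Hin.
have [Hs2a Hs2r] : s2 != last s a /\ s2 \notin r by move: Hin; rewrite in_cons => /norP.
have [u1 [u [u2 [Eu Hu2 Hs2u]]]] := split_after_last Ha Hs2a.
have Eu' : s :: (a ++ r) = u1 ++ u :: (u2 ++ r) by rewrite -cat_cons Eu -catA.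
have Hpath : path A s (a ++ r) by rewrite cat_path Hpa Hpr.
have Hpu := path_suffix Hpath Eu'.
have Hlu : last u (u2 ++ r) = last (last s a) r by rewrite (last_suffix Eu') last_cat.
have Hs2 : s2 \notin u2 ++ r by rewrite mem_cat negb_or Hs2u.
have Hv2 : last s2 p2 \notin u :: (u2 ++ r).
  rewrite Ep2; apply/negP => /(connect_to_last Hpu); rewrite Hlu.
  by move/(acyclic_back_arc acyc); apply.
have Hon : (last u (u2 ++ r) \in s2 :: p2) || (last u (u2 ++ r) \in s2 :: q2).
  by rewrite Hlu; apply: Hon2.
have [_ Harcs] := walk_on_cycle acyc root RC2 HC2 (erefl _) (erefl _) Hpu Hon Hv2 Hs2.
case: u2 Eu Hu2 {Hs2u Eu' Hpu Hlu Hs2 Hv2 Hon} Harcs => [//|b u2] Eu _ Harcs.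
have He2 := Harcs (u, b) (mem_head _ _).
have He1 : (u, b) \in C by apply: HaC; move: (@arcs_suffix _ u1 u (b :: u2) (u, b));
  rewrite -Eu /= in_cons eqxx; apply.
case: HC => [HC1 Ep _ _ _].
have := same_sink RC2 HC1 HC2 He1 He2 (erefl _) (erefl _); rewrite Ep Ep2 => Ev.
by move: Nyv; rewrite Ev Hyv2.
Qed.

Lemma beyond_cluster_cluster y v2 z : beyond_cluster y -> A y v2 -> reticulationb A v2 ->
  ~~ A y v -> in_cluster A v2 z -> beyond_cluster z.
Proof.
move=> [a [r [Ha Hr Hpr <-]]] Hyv2 R2 Nyv Hz.
have [s2 [p2 [q2 HC2]]] := canonical_cycle_exists acyc root NS RC1 R2.
have Hin := beyond_cluster_source_on_tail Ha Hpr Hyv2 Nyv HC2.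
case: HC2 => [_ _ Hroute _ _]; have [r2 [Hr2 Hp2 <- _]] := Hroute z Hz.
exact: beyond_cluster_reroute Ha Hpr Hin Hr2 Hp2.
Qed.

Definition away_from_cluster y :=
  ~~ same_cluster A y v /\ forall z, same_cluster A y z -> beyond_cluster z.

Lemma away_from_cluster_step x z y : beyond_cluster x \/ in_cluster A v x -> A x z ->
  ~~ reticulationb A z -> same_cluster A z y -> away_from_cluster y.
Proof.
move=> Hx Hxz Nz Hzy.
have Bz : beyond_cluster z.
  case: Hx => [Bx|Kx]; first exact: beyond_cluster_arc Bx Hxz.
  exact: beyond_cluster_child Kx Hxz.
have Nzv := beyond_cluster_not_parent Bz Nz.
have not_cluster v2 : reticulationb A v2 -> in_cluster A v2 z -> A z v2.
  by move=> R2 /orP [/eqP Ez|//]; rewrite Ez R2 in Nz.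
split.
  apply/negP => /(same_cluster_trans acyc root RC2 NS Hzy)/same_cluster_reticulation.
  by move=> /(_ acyc root RC2 NS Rv) /not_cluster => /(_ Rv) Azv; rewrite Azv in Nzv.
move=> w /(same_cluster_trans acyc root RC2 NS Hzy) /orP [/eqP <-//|].
case/existsP => v2 /and3P [R2 Hz2 Hw2].
exact: beyond_cluster_cluster Bz (not_cluster v2 R2 Hz2) R2 Nzv Hw2.
Qed.

Lemma away_from_cluster_arc y y2 : away_from_cluster y -> cluster_arc A y y2 ->
  away_from_cluster y2.
Proof.
move=> [_ Hy] /cluster_arcP [x1 [z1 [Hx1 Hxz Nz Hzy]]].
exact: away_from_cluster_step (or_introl (Hy _ Hx1)) Hxz Nz Hzy.
Qed.

Lemma cluster_reach_from_cluster x : in_cluster A v x -> ~~ cluster_reach A x x.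
Proof.
move=> Kx; apply/negP => /existsP [y /andP [/cluster_arcP [x1 [z1 [Hx1 Hxz Nz Hzy]]] Hyx]].
have Exv := in_cluster_same Rv Kx.
have Kx1 : in_cluster A v x1.
  apply: (same_cluster_reticulation acyc root RC2 NS _ Rv).
  by apply: (same_cluster_trans acyc root RC2 NS _ Exv); rewrite same_clusterC.
have [] := connect_invariant away_from_cluster_arc Hyx
  (away_from_cluster_step (or_intror Kx1) Hxz Nz Hzy).
by rewrite Exv.
Qed.

End BeyondCluster.

Section ClusterGraph.
Variables (V : finType) (A : rel V).
Hypothesis acyc : acyclic A.
Hypothesis root : exists rho, forall v, connect A rho v.
Hypothesis RC1 : forall v, indeg A v <= 2.
Hypothesis RC2 : arc_disjoint_cycles A.
Hypothesis NS : short_cycle_free A.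

(* A closed walk in the cluster graph either passes through a cluster, which it can
   never reenter, or consists of unclustered vertices and is a directed cycle of [A]. *)
Lemma cluster_reach_irrefl x : ~~ cluster_reach A x x.
Proof.
apply/negP => Hxx; have /existsP [y /andP [Hxy /connectP [r Hr Ex]]] := Hxx.
case Hcl: (has (clustered A) (y :: r)).
  case/hasP: Hcl => w Hw /existsP [v /andP [Rv Kw]].
  have Hxw : cluster_reach A x w by apply/existsP; exists y; rewrite Hxy (path_connect Hr).
  have Hwx : connect (cluster_arc A) w x by rewrite Ex; apply: connect_to_last.
  have [s [p [q HC]]] := canonical_cycle_exists acyc root NS RC1 Rv.
  by case/negP: (cluster_reach_from_cluster acyc root RC1 RC2 NS Rv HC Kw);
    apply: cluster_reach_rotate Hxw Hwx.
move/negbT: Hcl; rewrite -all_predC => Hcl.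
have Hx : ~~ clustered A x by rewrite Ex; apply: (allP Hcl); apply: mem_last.
have Hall : all (predC (clustered A)) (x :: y :: r) by apply/andP.
have HA : path A x (y :: r).
  apply: (sub_in_path (e := cluster_arc A) _ Hall); last by rewrite /= Hxy.
  by move=> a b; rewrite !inE; apply: unclustered_cluster_arc.
by case: (acyc (p := y :: r) isT HA); rewrite /= -Ex.
Qed.

Lemma same_cluster_arc x y : same_cluster A x y -> cluster_arc A x =1 cluster_arc A y.
Proof.
move=> Exy z; apply/cluster_arcP/cluster_arcP => -[x1 [z1 [Hx1 Hxz Nz Hzy]]];
  exists x1, z1; split => //.
  by apply: (same_cluster_trans acyc root RC2 NS _ Hx1); rewrite same_clusterC.
exact: (same_cluster_trans acyc root RC2 NS Exy Hx1).
Qed.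

Lemma same_cluster_reach x y : same_cluster A x y -> cluster_reach A x =1 cluster_reach A y.
Proof. by move=> Exy w; apply: eq_existsb => z; rewrite (same_cluster_arc Exy). Qed.

End ClusterGraph.

Section Backward.
Variables (V X : finType) (A : rel V) (phi : X -> V).
Hypothesis acyc : acyclic A.
Hypothesis root : exists rho, forall v, connect A rho v.
Hypothesis RC1 : forall v, indeg A v <= 2.
Hypothesis RC2 : arc_disjoint_cycles A.
Hypothesis Hcond : forall u, [/\ cond_a A phi u, cond_b A u & cond_c A u].

Lemma conditions_short_cycle_free : short_cycle_free A.
Proof.
move=> P Q u w H EP; have [_ [_ _ _ _ Huw]] := short_cycle_shape H EP.
have [_ _ Hc] := Hcond u.
have Hw : (w \in P) \/ (w \in Q) by left; rewrite EP mem_seq2 eqxx orbT.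
by case: (Hc w P Q Huw (short_cycle_sink acyc H EP) H Hw) => /(_ EP).
Qed.

Let NS := conditions_short_cycle_free.

Lemma leaf_reticulation_cluster v x z : reticulationb A v -> is_leaf A v ->
  in_cluster A v x -> A x z -> ~~ reticulationb A z -> False.
Proof.
move=> Rv Lv /orP [/eqP ->|Axv] Hxz Nz; first exact: leaf_arc Lv Hxz.
have [_ Hb _] := Hcond x; apply: Hb; last by exists v.
by apply: outdeg_children Hxz Axv; apply: contraNneq Nz => ->.
Qed.

Lemma labelled_cluster_arc x y : ~~ cluster_arc A (phi x) y.
Proof.
apply/negP => /cluster_arcP [x1 [z1 [Hx1 Hxz Nz _]]].
have [Ha _ _] := Hcond (phi x).
case: (Ha (ex_intro _ x erefl)) => [Lu|[v0 [Huv0 [R0 L0]]]].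
  case/orP: Hx1 => [/eqP Ex|/existsP [v /and3P [Rv Hu Hx1]]].
    by subst x1; apply: leaf_arc Lu Hxz.
  case/orP: (Hu) => [/eqP Eu|Auv]; last exact: leaf_arc Lu Auv.
  by apply: (leaf_reticulation_cluster Rv _ Hx1 Hxz Nz); rewrite -Eu.
apply: (leaf_reticulation_cluster R0 L0 _ Hxz Nz).
have Ku : in_cluster A v0 (phi x) by rewrite /in_cluster Huv0 orbT.
case/orP: Hx1 => [/eqP Ex|/existsP [v /and3P [Rv Hu Hx1]]]; first by subst x1.
by rewrite (in_cluster_unique acyc root RC2 NS R0 Rv Ku Hu).
Qed.

Definition cluster_height x : R := INR #|[set y | cluster_reach A x y]|.

Lemma cluster_height_time_stamp : time_stamp A phi cluster_height.
Proof.
split; first by move=> v; apply: pos_INR.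
split.
  move=> x; rewrite /cluster_height -[0%R]/(INR 0); congr INR; apply/eqP; rewrite cards_eq0.
  apply/eqP/setP => y; rewrite !inE; apply/negbTE/existsP => -[z /andP [Hz _]].
  by move: Hz; apply/negP; apply: labelled_cluster_arc.
split=> u v Huv Rv.
  have Wuv : cluster_arc A u v.
    by apply/cluster_arcP; exists u, v; rewrite !same_cluster_refl; split => //; apply/negP.
  apply: lt_INR; apply/ltP; apply: proper_card; apply/properP; split.
    apply/subsetP => w; rewrite !inE => /cluster_reach_connect Hvw.
    by apply/existsP; exists v; rewrite Wuv.
  exists v; rewrite !inE; first by apply/existsP; exists v; rewrite Wuv connect0.
  exact: cluster_reach_irrefl acyc root RC1 RC2 NS v.
have Euv : same_cluster A u v by apply: in_cluster_same Rv _; rewrite /in_cluster Huv orbT.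
rewrite /cluster_height; congr INR; apply: eq_card => w.
by rewrite !inE (same_cluster_reach acyc root RC2 NS Euv).
Qed.

End Backward.

Theorem mainTheorem1 (V X : finType) (A : rel V) (phi : X -> V) :
  rooted_cactus A phi ->
  (temporal A phi <->
   forall u : V, [/\ cond_a A phi u, cond_b A u & cond_c A u]).
Proof.
case=> _ [acyc [rho [_ Hrho]]] RC1 RC2 RC3.
have root : exists rho, forall v, connect A rho v by exists rho.
split=> [[t TS] u | Hcond]; last first.
  by exists (cluster_height A); apply: cluster_height_time_stamp.
split; first exact: time_stamp_cond_a acyc root RC2 TS u.
  exact: time_stamp_cond_b acyc root RC2 RC3 TS u.
exact: time_stamp_cond_c acyc root RC2 TS u.
Qed.
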